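(* There exists an instance of \textsc{MaxMSReco}, i.e., a monotone submodular $f:2^{[n]}\to\mathbb{R}_+$ and $X,Y\in\binom{[n]}{k}$, such that the optimal reconfiguration sequence $\mathcal{S}^*$ from $X$ to $Y$ under token jumping has $f(\mathcal{S}^* )=1$, while every reconfiguration sequence $\mathcal{S}$ from $X$ to $Y$ under token jumping all of whose sets are subsets of $X\cup Y$ has $f(\mathcal{S})\le\frac34$. (In particular the optimal sequence must use elements outside $X\cup Y$.)
   Context: $f$ is submodular if $f(S)+f(T)\ge f(S\cap T)+f(S\cup T)$ and monotone if $f(S)\le f(T)$ for $S\subseteq T$. Two sets are adjacent under token jumping if they have the same size $s$ and intersection of size $s-1$. A reconfiguration sequence from $X$ to $Y$ is a sequence of sets starting at $X$, ending at $Y$, with consecutive sets adjacent; its value is the minimum of $f$ over its sets. \textsc{MaxMSReco} asks for a reconfiguration sequence under token jumping maximizing this value. *)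

From HB Require Import structures.
From mathcomp Require Import all_boot all_order all_algebra.
From mathcomp Require Import reals.
Set Implicit Arguments. Unset Strict Implicit. Unset Printing Implicit Defensive.
Import Order.TTheory GRing.Theory Num.Theory.
Local Open Scope ring_scope.

Definition submodular (R : realType) (n : nat) (f : {set 'I_n} -> R) : Prop :=
  forall S T : {set 'I_n}, f (S :&: T) + f (S :|: T) <= f S + f T.

Definition monotone (R : realType) (n : nat) (f : {set 'I_n} -> R) : Prop :=
  forall S T : {set 'I_n}, S \subset T -> f S <= f T.

Definition nonneg (R : realType) (n : nat) (f : {set 'I_n} -> R) : Prop :=
  forall S : {set 'I_n}, 0 <= f S.

(* Token-jumping adjacency: same size s, intersection of size s-1
   (written without truncated subtraction). *)
Definition tj_adj (n : nat) (S T : {set 'I_n}) : bool :=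
  (#|S| == #|T|)%N && (#|S :&: T|.+1 == #|S|)%N.

(* A reconfiguration sequence from X to Y is represented as X :: s:
   it starts at X, each consecutive pair is adjacent, and it ends at Y. *)
Definition reco_seq (n : nat) (X Y : {set 'I_n}) (s : seq {set 'I_n}) : Prop :=
  path (@tj_adj n) X s /\ last X s = Y.

Definition seq_value (R : realType) (n : nat) (f : {set 'I_n} -> R)
  (X : {set 'I_n}) (s : seq {set 'I_n}) : R :=
  foldr (fun S m => Num.min (f S) m) (f X) s.

From HB Require Import structures.
From mathcomp Require Import all_boot all_order all_algebra.
From mathcomp Require Import reals.
Set Implicit Arguments. Unset Strict Implicit. Unset Printing Implicit Defensive.
Import Order.TTheory GRing.Theory Num.Theory.
Local Open Scope ring_scope.

(* Take for f the normalised coverage function of a 2x2 grid, with X the two rows,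
   Y the two columns and one extra element, a hub, covering every point.  X and Y
   both cover the grid, and so does every set of the route X, {row, hub},
   {column, hub}, Y, which therefore has value 1.  Inside X :|: Y, however, the
   first token jump out of X produces one row and one column, and these miss a
   point of the grid, so that set has value at most 3/4. *)

Definition swap (n : nat) (X : {set 'I_n}) (x y : 'I_n) : {set 'I_n} := y |: X :\ x.

Lemma tj_adj_swap (n : nat) (X : {set 'I_n}) (x y : 'I_n) :
  x \in X -> y \notin X -> tj_adj X (swap X x y).
Proof.
move=> xX yNX; have yNXx : y \notin X :\ x by rewrite inE (negbTE yNX) andbF.
have cardXx : #|X :\ x|.+1 = #|X| by rewrite (cardsD1 x X) xX.
rewrite /tj_adj /swap.
have -> : X :&: (y |: X :\ x) = X :\ x.
  apply/setP => i; rewrite !inE; have [->|_] := eqVneq i y; last by rewrite andbCA andbb.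
  by rewrite (negbTE yNX) andbF.
by rewrite cardsU1 yNXx add1n cardXx eqxx.
Qed.

Lemma tj_adj_swapE (n : nat) (X S : {set 'I_n}) : tj_adj X S ->
  exists x y, [/\ x \in X, y \notin X & S = swap X x y].
Proof.
case/andP => /eqP cardXS /eqP cardXI.
have /cards1P[x DxS] : #|X :\: S| == 1%N.
  by have := cardsID S X; rewrite -cardXI => /eqP; rewrite -addn1 eqn_add2l.
have /cards1P[y DyX] : #|S :\: X| == 1%N.
  by have := cardsID X S; rewrite setIC -cardXS -cardXI => /eqP; rewrite -addn1 eqn_add2l.
have /setDP[xX xNS] : x \in X :\: S by rewrite DxS set11.
have /setDP[yS yNX] : y \in S :\: X by rewrite DyX set11.
exists x, y; split=> //; apply/setP => i; rewrite /swap !inE.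
have [->|iNy] := eqVneq i y; first exact: yS.
have [iX|iNX] /= := boolP (i \in X).
- by have /setP/(_ i) := DxS; rewrite !inE iX !andbT => <-; rewrite negbK.
- by have /setP/(_ i) := DyX; rewrite !inE iNX (negbTE iNy) andbF /= => ->.
Qed.

Section Covered.
Variables (T U : finType) (cov : T -> U -> bool).

Definition covered (A : {set T}) : {set U} := [set u | [exists t in A, cov t u]].

Lemma coveredS (A B : {set T}) : A \subset B -> covered A \subset covered B.
Proof.
move=> /subsetP sAB; apply/subsetP => u; rewrite !inE => /existsP[t /andP[tA tu]].
by apply/existsP; exists t; rewrite sAB.
Qed.

Lemma coveredU (A B : {set T}) : covered (A :|: B) = covered A :|: covered B.
Proof.
apply/setP => u; rewrite !inE; apply/existsP/orP.
- by case=> t /andP[/setUP[tA|tB] tu]; [left|right]; apply/existsP; exists t; rewrite ?tA ?tB.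
- by case=> /existsP[t /andP[tAB tu]]; exists t; rewrite inE tAB ?orbT.
Qed.

Lemma coveredI (A B : {set T}) : covered (A :&: B) \subset covered A :&: covered B.
Proof. by rewrite subsetI !coveredS ?subsetIl ?subsetIr. Qed.

Lemma covered_universal (A : {set T}) (t : T) :
  t \in A -> (forall u, cov t u) -> covered A = [set: U].
Proof.
by move=> tA tU; apply/setP => u; rewrite !inE; apply/existsP; exists t; rewrite tA tU.
Qed.

End Covered.

Section Coverage.
Variables (R : realType) (n : nat) (U : finType) (cov : 'I_n -> U -> bool).

Definition coverage (S : {set 'I_n}) : R := #|covered cov S|%:R / #|U|%:R.

Lemma coverage_nonneg : nonneg coverage.
Proof. by move=> S; rewrite divr_ge0. Qed.

Lemma ler_coverage (S T : {set 'I_n}) :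
  (#|covered cov S| <= #|covered cov T|)%N -> coverage S <= coverage T.
Proof. by move=> le_ST; rewrite ler_wpM2r ?invr_ge0 ?ler_nat. Qed.

Lemma coverage_monotone : monotone coverage.
Proof. by move=> S T /(coveredS cov) /subset_leq_card /ler_coverage. Qed.

Lemma coverage_submodular : submodular coverage.
Proof.
move=> S T; rewrite /coverage -!mulrDl -!natrD ler_wpM2r ?invr_ge0 // ler_nat.
rewrite addnC -(cardsUI (covered cov S)) coveredU leq_add2l.
by apply: subset_leq_card; apply: coveredI.
Qed.

Lemma coverage_le1 (S : {set 'I_n}) : coverage S <= 1.
Proof.
have [U0|Upos] := posnP #|U|; first by rewrite /coverage U0 invr0 mulr0.
by rewrite ler_pdivrMr ?ltr0n // mul1r ler_nat max_card.
Qed.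

Lemma coverage_full (S : {set 'I_n}) :
  (0 < #|U|)%N -> covered cov S = [set: U] -> coverage S = 1.
Proof. by move=> Upos coverS; rewrite /coverage coverS cardsT divff ?pnatr_eq0 -?lt0n. Qed.

Lemma coverage_miss (S : {set 'I_n}) (u : U) :
  u \notin covered cov S -> coverage S <= #|U|.-1%:R / #|U|%:R.
Proof.
move=> uNS; rewrite ler_wpM2r ?invr_ge0 // ler_nat -(cardsC1 u).
by apply: subset_leq_card; apply/subsetP => v vS; rewrite !inE; apply: contraNneq uNS => <-.
Qed.

End Coverage.

Section ReconfigurationValue.
Variables (R : realType) (n : nat) (f : {set 'I_n} -> R).

Lemma seq_value_le_head (X : {set 'I_n}) (s : seq {set 'I_n}) : seq_value f X s <= f X.
Proof. by elim: s => [|S s IHs] //=; rewrite ge_min IHs orbT. Qed.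

Lemma seq_value_le_cons (X S : {set 'I_n}) (s : seq {set 'I_n}) :
  seq_value f X (S :: s) <= f S.
Proof. by rewrite /= ge_min lexx. Qed.

Lemma seq_value_const (X : {set 'I_n}) (s : seq {set 'I_n}) (c : R) :
  f X = c -> {in s, forall S, f S = c} -> seq_value f X s = c.
Proof.
move=> fX; elim: s => [|S s IHs] fs //=.
by rewrite fs ?mem_head // IHs ?minxx // => T Ts; rewrite fs // inE Ts orbT.
Qed.

End ReconfigurationValue.

Lemma reco_seq_first_step (n : nat) (X Y : {set 'I_n}) (s : seq {set 'I_n}) :
  reco_seq X Y s -> X != Y -> exists S s', s = S :: s' /\ tj_adj X S.
Proof. by case: s => [[_ /= ->]|S s' [/andP[XS _] _] _]; [rewrite eqxx | exists S, s']. Qed.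

Definition row0 : 'I_5 := @Ordinal 5 0 isT.
Definition row1 : 'I_5 := @Ordinal 5 1 isT.
Definition col0 : 'I_5 := @Ordinal 5 2 isT.
Definition col1 : 'I_5 := @Ordinal 5 3 isT.
Definition hub : 'I_5 := @Ordinal 5 4 isT.

Definition rows : {set 'I_5} := [set row0; row1].
Definition cols : {set 'I_5} := [set col0; col1].

(* Points of the 2x2 grid are pairs (row, column); [row_k] covers row [k],
   [col_k] covers column [k] and [hub] covers everything. *)
Definition grid_cov (i : 'I_5) (u : bool * bool) : bool :=
  match val i with
  | 0 => ~~ u.1 | 1 => u.1 | 2 => ~~ u.2 | 3 => u.2 | _ => true
  end.

Lemma card_grid : #|{: bool * bool}| = 4%N.
Proof. by rewrite card_prod card_bool. Qed.

Lemma covered_rows : covered grid_cov rows = [set: bool * bool].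
Proof.
apply/setP => -[r c]; rewrite !inE; apply/existsP.
by exists (if r then row1 else row0); case: r; rewrite !inE eqxx ?orbT.
Qed.

Lemma covered_cols : covered grid_cov cols = [set: bool * bool].
Proof.
apply/setP => -[r c]; rewrite !inE; apply/existsP.
by exists (if c then col1 else col0); case: c; rewrite !inE eqxx ?orbT.
Qed.

Lemma swap_row_col_uncovered (x y : 'I_5) :
  x \in rows -> y \in cols ->
  (x == row1, y == col0) \notin covered grid_cov (swap rows x y).
Proof.
move=> /set2P[->|->] /set2P[->|->]; rewrite inE negb_exists; apply/forallP;
  by case=> [[|[|[|[|[|?]]]]] ?]; rewrite !inE.
Qed.

Definition hub_path : seq {set 'I_5} := [:: [set row0; hub]; [set col0; hub]; cols].

Lemma reco_hub_path : reco_seq rows cols hub_path.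
Proof.
have step (X S : {set 'I_5}) (x y : 'I_5) :
  x \in X -> y \notin X -> S =i swap X x y -> tj_adj X S.
  by move=> xX yNX /setP ->; apply: tj_adj_swap.
split=> //=; rewrite (step _ _ row1 hub) ?(step [set row0; hub] _ row0 col0)
  ?(step [set col0; hub] _ hub col1) //;
  by [rewrite !inE | case=> [[|[|[|[|[|?]]]]] ?]; rewrite !inE].
Qed.

Lemma covered_hub_path :
  {in hub_path, forall S, covered grid_cov S = [set: bool * bool]}.
Proof.
move=> S; rewrite !inE => /or3P[] /eqP ->; rewrite ?covered_cols //;
  by apply: (covered_universal (t := hub)); rewrite ?inE ?eqxx ?orbT.
Qed.

Lemma adj_rows_uncovered (S : {set 'I_5}) :
  tj_adj rows S -> S \subset rows :|: cols -> exists u, u \notin covered grid_cov S.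
Proof.
case/tj_adj_swapE=> x [y [xX yNX ->]] /subsetP/(_ y).
rewrite /swap in_setU1 eqxx in_setU (negbTE yNX) => /(_ isT) yY.
by exists (x == row1, y == col0); apply: swap_row_col_uncovered.
Qed.

Theorem mainTheorem9 (R : realType) :
  exists (n k : nat) (f : {set 'I_n} -> R) (X Y : {set 'I_n}),
    [/\ nonneg f, monotone f, submodular f, #|X| = k & #|Y| = k] /\
    (exists s, reco_seq X Y s /\ seq_value f X s = 1 /\
       (forall s', reco_seq X Y s' -> seq_value f X s' <= 1)) /\
    (forall s, reco_seq X Y s ->
       (forall S, S \in X :: s -> S \subset X :|: Y) ->
       seq_value f X s <= 3 / 4).
Proof.
pose f := @coverage R 5 _ grid_cov.
have XY : rows != cols by apply/eqP => /setP/(_ row0); rewrite !inE.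
exists 5%N, 2%N, f, rows, cols; split; [split|split].
- exact: coverage_nonneg.
- exact: coverage_monotone.
- exact: coverage_submodular.
- by rewrite cards2.
- by rewrite cards2.
- exists hub_path; split; [exact: reco_hub_path | split].
  + apply: seq_value_const => [|S /covered_hub_path coverS];
      by apply: coverage_full; rewrite ?card_grid ?covered_rows.
  + by move=> s' _; rewrite (le_trans (seq_value_le_head _ _ _)) ?coverage_le1.
- move=> s reco_s; have [S [s' [-> XS]]] := reco_seq_first_step reco_s XY.
  move=> sub_s; apply: le_trans (seq_value_le_cons _ _ _ _) _.
  have [|u uNS] := adj_rows_uncovered XS; first by apply: sub_s; rewrite !in_cons eqxx orbT.
  by have := coverage_miss R uNS; rewrite card_grid.
Qed.
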